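(* Let $\lambda>0$, $\gamma>0$, $\beta\ge 0$. Let $X$ be the Banach space of bounded analytic functions $h:[0,\lambda]\to\mathbb{R}$ with the supremum norm $\|h\|_\infty=\sup\{|h(x)|:0\le x\le\lambda\}$, and $K=\{h\in X: h\ge 0,\ \|h\|_\infty\le 1\}$. For $h\in K$ let $\Psi_h=1+\beta h$. Then for $h\in K$ the only solution $y$ of the linear problem \begin{align*} &[\Psi_h(\eta)y'(\eta)]'+2\eta y'(\eta)=0,\quad 0<\eta<\lambda,\\ &\Psi_h(0)y'(0)-\gamma y(0)=0,\\ &y(\lambda)=1, \end{align*} is given by $$y(\eta)=D_h\left(\frac1\gamma+\int_0^\eta\frac{\exp\left(-2\int_0^x\frac{\xi}{\Psi_h(\xi)}d\xi\right)}{\Psi_h(x)}\,dx\right),\quad 0<\eta<\lambda,$$ where $$D_h=\gamma\left(1+\gamma\int_0^\lambda\frac{\exp\left(-2\int_0^x\frac{\xi}{\Psi_h(\xi)}d\xi\right)}{\Psi_h(x)}\,dx\right)^{-1}.$$ Moreover, $y\in K$. *)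

From Stdlib Require Import Reals.
From Coquelicot Require Import Coquelicot.
Open Scope R_scope.

Definition analytic_on (a b : R) (h : R -> R) : Prop :=
  forall x0, a <= x0 <= b ->
    exists r, 0 < r /\ exists c : nat -> R,
      forall x, a <= x <= b -> Rabs (x - x0) < r ->
        is_series (fun n => c n * (x - x0) ^ n) (h x).

Definition inX (lam : R) (h : R -> R) : Prop :=
  analytic_on 0 lam h /\
  exists M, forall x, 0 <= x <= lam -> Rabs (h x) <= M.

Definition inK (lam : R) (h : R -> R) : Prop :=
  inX lam h /\
  (forall x, 0 <= x <= lam -> 0 <= h x) /\
  (forall x, 0 <= x <= lam -> Rabs (h x) <= 1).

Definition Psi (beta : R) (h : R -> R) (x : R) : R := 1 + beta * h x.

(* Classical solution of
     [Psi y']' + 2 eta y' = 0 on (0,lam),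
     Psi(0) y'(0) - gamma y(0) = 0,  y(lam) = 1.
   dy is the derivative of y on (0,lam); dy 0 is the (one-sided, right)
   derivative of y at 0; y is required to be left-continuous at lam so that
   the boundary condition y(lam) = 1 is meaningful. *)
Definition is_solution (lam gam beta : R) (h y : R -> R) : Prop :=
  exists dy : R -> R,
    (forall x, 0 < x < lam -> is_derive y x (dy x)) /\
    filterlim (fun t => (y t - y 0) / (t - 0)) (at_right 0) (locally (dy 0)) /\
    filterlim y (at_left lam) (locally (y lam)) /\
    (forall x, 0 < x < lam ->
       ex_derive (fun t => Psi beta h t * dy t) x /\
       Derive (fun t => Psi beta h t * dy t) x + 2 * x * dy x = 0) /\
    Psi beta h 0 * dy 0 - gam * y 0 = 0 /\
    y lam = 1.

Definition kern (beta : R) (h : R -> R) (x : R) : R :=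
  exp (-2 * RInt (fun xi => xi / Psi beta h xi) 0 x) / Psi beta h x.

Definition Dh (lam gam beta : R) (h : R -> R) : R :=
  gam * / (1 + gam * RInt (kern beta h) 0 lam).

Definition ysol (lam gam beta : R) (h : R -> R) (eta : R) : R :=
  Dh lam gam beta h * (1 / gam + RInt (kern beta h) 0 eta).

From Stdlib Require Import Reals Lra Lia.
From Coquelicot Require Import Coquelicot.
Open Scope R_scope.

(* Write Psi = 1 + beta h and k = exp (-2 int_0^x xi / Psi) / Psi.  The equation reads
   (Psi y')' = -2 eta y', so Psi y' exp (2 int_0^eta xi / Psi) is constant: y' = C k and
   y = c0 + C int_0^eta k on (0, lam).  The condition at 0 forces C = gam c0 and y(lam) = 1
   forces c0 (1 + gam int_0^lam k) = 1, which is the stated formula; as k > 0, y increases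
   from D_h / gam > 0 to 1.
   For analyticity, h is extended to R by constants and every ingredient of the formula is
   expanded in power series around each point of [0, lam].  Expansions with geometrically
   bounded coefficients are stable under sums, products, reciprocals, antiderivatives and
   solutions of w' = a w; for the reciprocal and the linear equation the coefficients are
   given by convolution recursions, whose growth is controlled by one estimate. *)

(** * Geometrically bounded power series *)

Definition geom_bounded (a : nat -> R) : Prop :=
  exists M r, 0 <= M /\ 0 < r /\ forall n, Rabs (a n) <= M * r ^ n.

Definition PS_const (k : R) (n : nat) : R := match n with O => k | S _ => 0 end.

Lemma is_pseries_const k x : is_pseries (PS_const k) x k.
Proof.
  apply is_pseries_R.
  assert (H := is_series_scal_r k _ _ (is_series_geom 0 ltac:(rewrite Rabs_R0; lra))).
  replace (/ (1 - 0) * k) with k in H by field.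
  refine (is_series_ext _ _ _ _ H).
  intros [|n]; simpl; ring.
Qed.

Lemma pow_le_pow_base M r r' n : 0 <= M -> 0 <= r <= r' -> M * r ^ n <= M * r' ^ n.
Proof. intros HM Hr. apply Rmult_le_compat_l; [exact HM | apply pow_incr; exact Hr]. Qed.

Lemma geom_bounded_inside a (x0 : R) :
  geom_bounded a -> locally x0 (fun x => Rbar_lt (Rabs (x - x0)) (CV_radius a)).
Proof.
  intros (M & r & HM & Hr & Ha).
  assert (Hrad : Rbar_le (/ r) (CV_radius a)).
  { apply (proj1 (CV_radius_bounded a)). exists M. intro n.
    rewrite Rabs_mult, <- RPow_abs, (Rabs_pos_eq (/ r)) by (left; apply Rinv_0_lt_compat, Hr).
    rewrite <- (Rmult_1_r M), <- (pow1 n), <- (Rinv_r r) by lra.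
    rewrite Rpow_mult_distr, <- Rmult_assoc.
    apply Rmult_le_compat_r; [apply pow_le; left; apply Rinv_0_lt_compat, Hr | apply Ha]. }
  exists (mkposreal _ (Rinv_0_lt_compat r Hr)). intros x Hx.
  apply (Rbar_lt_le_trans _ (/ r)); [exact Hx | exact Hrad].
Qed.

Lemma geom_bounded_const k : geom_bounded (PS_const k).
Proof.
  exists (Rabs k), 1. repeat split; [apply Rabs_pos | lra |].
  intros [|n]; rewrite pow1, Rmult_1_r; simpl; [lra | rewrite Rabs_R0; apply Rabs_pos].
Qed.

Lemma geom_bounded_scal k a : geom_bounded a -> geom_bounded (PS_scal k a).
Proof.
  intros (M & r & HM & Hr & Ha). exists (Rabs k * M), r.
  repeat split; [apply Rmult_le_pos; [apply Rabs_pos | exact HM] | exact Hr |].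
  intro n. unfold PS_scal; simpl. change (scal k (a n)) with (k * a n).
  rewrite Rabs_mult, Rmult_assoc. apply Rmult_le_compat_l; [apply Rabs_pos | apply Ha].
Qed.

Lemma geom_bounded_plus a b : geom_bounded a -> geom_bounded b -> geom_bounded (PS_plus a b).
Proof.
  intros (M & r & HM & Hr & Ha) (N & s & HN & Hs & Hb).
  exists (M + N), (Rmax r s).
  repeat split; [lra | apply (Rlt_le_trans _ r); [exact Hr | apply Rmax_l] |].
  intro n. unfold PS_plus. change (plus (a n) (b n)) with (a n + b n).
  eapply Rle_trans; [apply Rabs_triang |]. rewrite Rmult_plus_distr_r.
  apply Rplus_le_compat.
  - eapply Rle_trans; [apply Ha | apply pow_le_pow_base; [exact HM | split; [lra | apply Rmax_l]]].
  - eapply Rle_trans; [apply Hb | apply pow_le_pow_base; [exact HN | split; [lra | apply Rmax_r]]].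
Qed.

Lemma geom_bounded_Int a : geom_bounded a -> geom_bounded (PS_Int a).
Proof.
  intros (M & r & HM & Hr & Ha). exists (M / r), r.
  repeat split; [apply Rdiv_le_0_compat; lra | exact Hr |].
  intros [|n]; unfold PS_Int.
  - rewrite Rabs_R0. apply Rmult_le_pos; [apply Rdiv_le_0_compat | apply pow_le]; lra.
  - assert (Hn : 1 <= INR (S n)) by (apply (le_INR 1); lia).
    unfold Rdiv. rewrite Rabs_mult, Rabs_inv, (Rabs_pos_eq (INR (S n))) by lra.
    replace (M * / r * r ^ S n) with (M * r ^ n) by (simpl; field; lra).
    rewrite <- (Rmult_1_r (M * r ^ n)).
    apply Rmult_le_compat; [apply Rabs_pos | left; apply Rinv_0_lt_compat; lra | apply Ha |].
    rewrite <- Rinv_1. apply Rinv_le_contravar; lra.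
Qed.

Lemma INR_S_le_pow2 n : INR (S n) <= 2 ^ n.
Proof.
  induction n as [|n IH]; [simpl; lra |].
  rewrite S_INR. change (2 ^ S n) with (2 * 2 ^ n).
  assert (1 <= 2 ^ n) by (apply pow_R1_Rle; lra). lra.
Qed.

Lemma geom_bounded_mult a b : geom_bounded a -> geom_bounded b -> geom_bounded (PS_mult a b).
Proof.
  intros (M & r & HM & Hr & Ha) (N & s & HN & Hs & Hb).
  set (t := Rmax r s).
  assert (Hrt : r <= t) by apply Rmax_l. assert (Hst : s <= t) by apply Rmax_r.
  exists (M * N), (2 * t). repeat split; [apply Rmult_le_pos; lra | lra |].
  intro n. unfold PS_mult.
  eapply Rle_trans; [apply sum_f_R0_triangle |].
  apply Rle_trans with (sum_f_R0 (fun _ => M * N * t ^ n) n).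
  - apply sum_Rle. intros k Hk. rewrite Rabs_mult.
    replace (M * N * t ^ n) with ((M * t ^ k) * (N * t ^ (n - k)))
      by (rewrite Rmult_assoc, <- (Rmult_assoc (t ^ k)), (Rmult_comm (t ^ k)),
            Rmult_assoc, <- pow_add; replace (k + (n - k))%nat with n by lia; ring).
    apply Rmult_le_compat; try apply Rabs_pos.
    + eapply Rle_trans; [apply Ha | apply pow_le_pow_base; lra].
    + eapply Rle_trans; [apply Hb | apply pow_le_pow_base; lra].
  - rewrite sum_cte, Rpow_mult_distr.
    assert (0 <= M * N * t ^ n) by (apply Rmult_le_pos; [apply Rmult_le_pos | apply pow_le]; lra).
    pose proof (INR_S_le_pow2 n).
    replace (M * N * (2 ^ n * t ^ n)) with (M * N * t ^ n * 2 ^ n) by ring.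
    apply Rmult_le_compat_l; assumption.
Qed.

Fixpoint strong_rec_upto (step : nat -> (nat -> R) -> R) (n : nat) : nat -> R :=
  match n with
  | O => fun _ => step O (fun _ => 0)
  | S k => let f := strong_rec_upto step k in
           fun m => if Nat.leb m k then f m else step (S k) f
  end.

Definition strong_rec (step : nat -> (nat -> R) -> R) (n : nat) : R :=
  strong_rec_upto step n n.

Lemma strong_rec_upto_eq step k m : (m <= k)%nat -> strong_rec_upto step k m = strong_rec step m.
Proof.
  induction k as [|k IH]; intros Hm.
  - replace m with O by lia. reflexivity.
  - destruct (Nat.eq_dec m (S k)) as [-> | Hne]; [reflexivity |].
    simpl. replace (Nat.leb m k) with true by (symmetry; apply Nat.leb_le; lia).
    apply IH. lia.
Qed.

Lemma strong_rec_eq step :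
  (forall n f g, (forall i, (i < n)%nat -> f i = g i) -> step n f = step n g) ->
  forall n, strong_rec step n = step n (strong_rec step).
Proof.
  intros Hstep [|n].
  - apply Hstep. lia.
  - unfold strong_rec at 1. cbn [strong_rec_upto].
    replace (Nat.leb (S n) n) with false by (symmetry; apply Nat.leb_gt; lia).
    apply Hstep. intros i Hi. apply strong_rec_upto_eq. lia.
Qed.

Lemma sum_geom_le_2 t m : 0 <= t <= / 2 -> sum_f_R0 (fun i => t ^ i) m <= 2.
Proof.
  intros Ht. rewrite tech3 by lra.
  assert (0 <= t ^ S m) by (apply pow_le; lra).
  apply (Rmult_le_reg_r (1 - t)); [lra |].
  unfold Rdiv. rewrite Rmult_assoc, Rinv_l by lra. lra.
Qed.

(* With B = 2 r + 2 A the ratio r / B is at most 1/2, so the geometric sum in the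
   induction step is at most 2, and 2 A <= B absorbs that factor. *)
Lemma conv_rec_bound (u : nat -> R) (A r : R) : 0 <= A -> 0 < r ->
  (forall m, Rabs (u (S m)) <= A * sum_f_R0 (fun i => r ^ i * Rabs (u (m - i)%nat)) m) ->
  forall n, Rabs (u n) <= Rabs (u O) * (2 * r + 2 * A) ^ n.
Proof.
  intros HA Hr Hu. set (B := 2 * r + 2 * A). set (t := r / B).
  assert (HB : 0 < B) by (unfold B; lra).
  assert (HtB : t * B = r) by (unfold t; field; lra).
  assert (Ht : 0 <= t <= / 2).
  { split; [unfold t; apply Rdiv_le_0_compat; lra |].
    apply (Rmult_le_reg_r B); [exact HB |]. rewrite HtB. unfold B. lra. }
  pose proof (Rabs_pos (u O)) as Hu0.
  intro n. induction n as [n IH] using (well_founded_induction Wf_nat.lt_wf).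
  destruct n as [|m]; [simpl; lra |].
  eapply Rle_trans; [apply Hu |].
  assert (HBm : 0 <= Rabs (u O) * B ^ m) by (apply Rmult_le_pos; [exact Hu0 | apply pow_le; lra]).
  apply Rle_trans with (A * (Rabs (u O) * B ^ m * 2)).
  - apply Rmult_le_compat_l; [exact HA |].
    apply Rle_trans with (sum_f_R0 (fun i => t ^ i * (Rabs (u O) * B ^ m)) m).
    + apply sum_Rle. intros i Hi.
      replace (t ^ i * (Rabs (u O) * B ^ m)) with (r ^ i * (Rabs (u O) * B ^ (m - i)))
        by (rewrite <- HtB, Rpow_mult_distr;
            replace (B ^ m) with (B ^ i * B ^ (m - i)) by (rewrite <- pow_add; f_equal; lia);
            ring).
      apply Rmult_le_compat_l; [apply pow_le; lra | apply IH; lia].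
    + rewrite <- scal_sum.
      apply Rmult_le_compat_l; [exact HBm | apply sum_geom_le_2, Ht].
  - change (B ^ S m) with (B * B ^ m).
    assert (2 * A <= B) by (unfold B; lra).
    replace (Rabs (u O) * (B * B ^ m)) with (B * (Rabs (u O) * B ^ m)) by ring.
    replace (A * (Rabs (u O) * B ^ m * 2)) with (2 * A * (Rabs (u O) * B ^ m)) by ring.
    apply Rmult_le_compat_r; assumption.
Qed.

Definition PS_inv (p : nat -> R) : nat -> R :=
  strong_rec (fun n q => match n with
    | O => / p O
    | S m => - / p O * sum_f_R0 (fun i => p (S i) * q (m - i)%nat) m
    end).

Lemma PS_inv_unfold p n : PS_inv p n =
  match n with
  | O => / p O
  | S m => - / p O * sum_f_R0 (fun i => p (S i) * PS_inv p (m - i)%nat) m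
  end.
Proof.
  apply strong_rec_eq. intros [|m] f g Hfg; [reflexivity |].
  f_equal. apply sum_eq. intros i Hi. rewrite Hfg by lia. reflexivity.
Qed.

Lemma PS_mult_inv p : p O <> 0 -> forall n, PS_mult p (PS_inv p) n = PS_const 1 n.
Proof.
  intros Hp [|m]; unfold PS_mult.
  - simpl. rewrite PS_inv_unfold. field. exact Hp.
  - rewrite decomp_sum by lia. simpl pred. rewrite (PS_inv_unfold p (S m - 0)). simpl.
    field. exact Hp.
Qed.

Lemma geom_bounded_PS_inv p : geom_bounded p -> p O <> 0 -> geom_bounded (PS_inv p).
Proof.
  intros (M & r & HM & Hr & Hbd) Hp.
  set (A := Rabs (/ p O) * M * r).
  assert (HA : 0 <= A)
    by (unfold A; apply Rmult_le_pos; [apply Rmult_le_pos; [apply Rabs_pos | exact HM] | lra]).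
  exists (Rabs (PS_inv p O)), (2 * r + 2 * A).
  repeat split; [apply Rabs_pos | lra |].
  apply conv_rec_bound; [exact HA | exact Hr |]. intro m.
  rewrite PS_inv_unfold, Rabs_mult, Rabs_Ropp.
  replace (A * _)
    with (Rabs (/ p O) * sum_f_R0 (fun i => r ^ i * Rabs (PS_inv p (m - i)%nat) * (M * r)) m)
    by (rewrite <- scal_sum; unfold A; ring).
  apply Rmult_le_compat_l; [apply Rabs_pos |].
  eapply Rle_trans; [apply sum_f_R0_triangle |]. apply sum_Rle. intros i Hi.
  rewrite Rabs_mult.
  replace (r ^ i * Rabs (PS_inv p (m - i)%nat) * (M * r))
    with (M * r ^ S i * Rabs (PS_inv p (m - i)%nat))
    by (simpl; ring).
  apply Rmult_le_compat_r; [apply Rabs_pos | apply Hbd].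
Qed.

Definition PS_linear_ode (a : nat -> R) (w0 : R) : nat -> R :=
  strong_rec (fun n w => match n with
    | O => w0
    | S m => / INR (S m) * sum_f_R0 (fun j => a j * w (m - j)%nat) m
    end).

Lemma PS_linear_ode_unfold a w0 n : PS_linear_ode a w0 n =
  match n with
  | O => w0
  | S m => / INR (S m) * sum_f_R0 (fun j => a j * PS_linear_ode a w0 (m - j)%nat) m
  end.
Proof.
  apply strong_rec_eq. intros [|m] f g Hfg; [reflexivity |].
  f_equal. apply sum_eq. intros i Hi. rewrite Hfg by lia. reflexivity.
Qed.

Lemma PS_derive_linear_ode a w0 n :
  PS_derive (PS_linear_ode a w0) n = PS_mult a (PS_linear_ode a w0) n.
Proof.
  unfold PS_derive. rewrite PS_linear_ode_unfold, <- Rmult_assoc, Rinv_r, Rmult_1_l;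
    [reflexivity | apply not_0_INR; lia].
Qed.

Lemma geom_bounded_PS_linear_ode a w0 : geom_bounded a -> geom_bounded (PS_linear_ode a w0).
Proof.
  intros (M & r & HM & Hr & Hbd).
  exists (Rabs (PS_linear_ode a w0 O)), (2 * r + 2 * M).
  repeat split; [apply Rabs_pos | lra |].
  apply conv_rec_bound; [exact HM | exact Hr |]. intro m.
  assert (Hm : 1 <= INR (S m)) by (apply (le_INR 1); lia).
  rewrite PS_linear_ode_unfold, Rabs_mult, Rabs_inv, (Rabs_pos_eq (INR (S m))) by lra.
  rewrite <- (Rmult_1_l (M * _)).
  apply Rmult_le_compat; [left; apply Rinv_0_lt_compat; lra | apply Rabs_pos | |].
  - rewrite <- Rinv_1. apply Rinv_le_contravar; lra.
  - rewrite scal_sum. eapply Rle_trans; [apply sum_f_R0_triangle |]. apply sum_Rle. intros i Hi.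
    rewrite Rabs_mult.
    replace (r ^ i * Rabs (PS_linear_ode a w0 (m - i)%nat) * M)
      with (M * r ^ i * Rabs (PS_linear_ode a w0 (m - i)%nat)) by ring.
    apply Rmult_le_compat_r; [apply Rabs_pos | apply Hbd].
Qed.

Lemma is_lim_seq_abs_bounded (u : nat -> R) (l : R) :
  is_lim_seq u l -> exists M, forall n, Rabs (u n) <= M.
Proof.
  intro Hu. apply is_lim_seq_abs in Hu. apply is_lim_seq_Reals in Hu.
  destruct (cauchy_bound _ (CV_Cauchy _ (exist _ _ Hu))) as [M HM].
  exists M. intro n. apply HM. exists n. reflexivity.
Qed.

Lemma is_derive_0_eq (phi : R -> R) x y :
  (forall z, Rmin x y <= z <= Rmax x y -> is_derive phi z 0) -> phi x = phi y.
Proof.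
  intro Hd. destruct (MVT_gen phi x y (fun _ => 0)) as (c & _ & Hc).
  - intros z Hz. apply Hd. lra.
  - intros z Hz. apply continuity_pt_filterlim.
    apply (@ex_derive_continuous R_AbsRing R_NormedModule). exists 0. apply Hd, Hz.
  - lra.
Qed.

Lemma is_derive_PSeries_shift c (x0 x : R) : Rbar_lt (Rabs (x - x0)) (CV_radius c) ->
  is_derive (fun t => PSeries c (t - x0)) x (PSeries (PS_derive c) (x - x0)).
Proof.
  intro Hx. rewrite <- (Rmult_1_l (PSeries (PS_derive c) (x - x0))).
  apply (is_derive_comp (PSeries c) (fun t => t - x0)).
  - apply is_derive_PSeries, Hx.
  - auto_derive; [exact I | ring].
Qed.

Lemma is_derive_right_quotient (f : R -> R) x l : is_derive f x l ->
  filterlim (fun t => (f t - f x) / (t - x)) (at_right x) (locally l).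
Proof.
  intros Hf. apply is_derive_Reals in Hf. apply filterlim_locally. intros eps.
  destruct (Hf eps (cond_pos eps)) as [delta Hd].
  exists delta. intros t Ht Hxt. change (Rabs (t - x) < delta) in Ht.
  change (Rabs ((f t - f x) / (t - x) - l) < eps).
  replace t with (x + (t - x)) at 1 by ring. apply Hd; [lra | exact Ht].
Qed.

Lemma right_continuous_of_quotient (f : R -> R) x l :
  filterlim (fun t => (f t - f x) / (t - x)) (at_right x) (locally l) ->
  filterlim f (at_right x) (locally (f x)).
Proof.
  intros Hq.
  apply (filterlim_ext_loc (fun t => f x + (t - x) * ((f t - f x) / (t - x)))).
  - exists (mkposreal 1 Rlt_0_1). intros t _ Hxt. field. lra.
  - replace (locally (f x)) with (locally (f x + 0 * l)) by (f_equal; ring).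
    eapply filterlim_comp_2; [apply filterlim_const | | apply (filterlim_plus (f x) (0 * l))].
    eapply filterlim_comp_2; [| exact Hq | apply (filterlim_mult 0 l)].
    eapply filterlim_filter_le_1; [apply filter_le_within |].
    replace 0 with (x - x) by ring.
    apply (continuous_minus (fun t => t) (fun _ => x));
      [apply continuous_id | apply continuous_const].
Qed.

Lemma locally_open_interval a b (x : R) : a < x < b -> locally x (fun t => a < t < b).
Proof.
  intros Hx. exists (mkposreal (Rmin (x - a) (b - x)) ltac:(apply Rmin_glb_lt; lra)).
  intros t Ht. change (Rabs (t - x) < Rmin (x - a) (b - x)) in Ht.
  apply Rabs_def2 in Ht.
  pose proof (Rmin_l (x - a) (b - x)). pose proof (Rmin_r (x - a) (b - x)). lra.
Qed.

Lemma at_right_open_interval a b : a < b -> at_right a (fun t => a < t < b).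
Proof.
  intros Hab. exists (mkposreal (b - a) ltac:(lra)). intros t Ht Hat.
  change (Rabs (t - a) < b - a) in Ht. apply Rabs_def2 in Ht. lra.
Qed.

Lemma at_left_open_interval a b : a < b -> at_left b (fun t => a < t < b).
Proof.
  intros Hab. exists (mkposreal (b - a) ltac:(lra)). intros t Ht Htb.
  change (Rabs (t - b) < b - a) in Ht. apply Rabs_def2 in Ht. lra.
Qed.

Lemma segment_in_open_interval a b x y z : a < x < b -> a < y < b ->
  Rmin x y <= z <= Rmax x y -> a < z < b.
Proof. intros Hx Hy. unfold Rmin, Rmax. destruct Rle_dec; lra. Qed.

Definition clamp (a b x : R) : R := Rmax a (Rmin b x).

Lemma clamp_id a b x : a <= x <= b -> clamp a b x = x.
Proof. intros Hx. unfold clamp. rewrite Rmin_right, Rmax_right; lra. Qed.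

Lemma clamp_in a b x : a <= b -> a <= clamp a b x <= b.
Proof. intros Hab. unfold clamp, Rmax, Rmin. repeat destruct Rle_dec; lra. Qed.

Lemma clamp_continuous a b (x : R) : continuous (clamp a b) x.
Proof.
  apply filterlim_locally. intros eps. exists eps. intros y Hy.
  change (Rabs (y - x) < eps) in Hy. change (Rabs (clamp a b y - clamp a b x) < eps).
  eapply Rle_lt_trans; [| exact Hy].
  unfold clamp, Rmax, Rmin, Rabs. repeat destruct Rle_dec; repeat destruct Rcase_abs; lra.
Qed.

Lemma continuous_comp_clamp a b (f : R -> R) (x : R) : a <= b ->
  (forall y, a <= y <= b ->
     filterlim f (within (fun z => a <= z <= b) (locally y)) (locally (f y))) ->
  continuous (fun t => f (clamp a b t)) x.
Proof.
  intros Hab Hf. eapply filterlim_comp; [| apply Hf, clamp_in, Hab].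
  intros P HP. apply (clamp_continuous a b x) in HP. unfold filtermap in *.
  revert HP. apply filter_imp. intros t Ht. apply Ht, clamp_in, Hab.
Qed.

(** * Local power series expansions on an interval *)

Section Expansion.

Variables a b : R.

Local Notation near x0 := (within (fun x => a <= x <= b) (locally x0)).

Definition is_expansion (f : R -> R) (x0 : R) (c : nat -> R) : Prop :=
  geom_bounded c /\ near x0 (fun x => is_pseries c (x - x0) (f x)).

Lemma near_center x0 (P : R -> Prop) : a <= x0 <= b -> near x0 P -> P x0.
Proof. intros Hx0 H. exact (locally_singleton _ _ H Hx0). Qed.

Lemma near_imp x0 (P Q : R -> Prop) :
  (forall x, a <= x <= b -> P x -> Q x) -> near x0 P -> near x0 Q.
Proof. intro HPQ. unfold within. apply filter_imp. intros x HP Hx. exact (HPQ x Hx (HP Hx)). Qed.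

Lemma is_expansion_inside f x0 c : is_expansion f x0 c ->
  near x0 (fun x => Rbar_lt (Rabs (x - x0)) (CV_radius c) /\ is_pseries c (x - x0) (f x)).
Proof.
  intros [Hc Hf]. apply filter_and; [| exact Hf].
  apply filter_le_within, geom_bounded_inside, Hc.
Qed.

Lemma is_expansion_center f x0 c : a <= x0 <= b -> is_expansion f x0 c -> c O = f x0.
Proof.
  intros Hx0 [_ Hf]. apply (near_center x0) in Hf; [| exact Hx0].
  rewrite Rminus_eq_0 in Hf. rewrite <- PSeries_0. exact (is_pseries_unique _ _ _ Hf).
Qed.

Lemma is_expansion_ext f g x0 c : (forall x, a <= x <= b -> f x = g x) ->
  is_expansion f x0 c -> is_expansion g x0 c.
Proof.
  intros Hfg [Hc Hf]. split; [exact Hc |].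
  revert Hf. apply near_imp. intros x Hx. rewrite Hfg by exact Hx. trivial.
Qed.

Lemma is_expansion_const k x0 : is_expansion (fun _ => k) x0 (PS_const k).
Proof.
  split; [apply geom_bounded_const |].
  apply filter_forall. intro x. apply is_pseries_const.
Qed.

Lemma is_expansion_plus f g x0 cf cg : is_expansion f x0 cf -> is_expansion g x0 cg ->
  is_expansion (fun x => f x + g x) x0 (PS_plus cf cg).
Proof.
  intros [Hcf Hf] [Hcg Hg]. split; [apply geom_bounded_plus; assumption |].
  generalize (filter_and _ _ Hf Hg). apply filter_imp. intros x [Hfx Hgx].
  apply (@is_pseries_plus R_AbsRing R_NormedModule); assumption.
Qed.

Lemma is_expansion_scal k f x0 c : is_expansion f x0 c ->
  is_expansion (fun x => k * f x) x0 (PS_scal k c).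
Proof.
  intros [Hc Hf]. split; [apply geom_bounded_scal, Hc |].
  revert Hf. apply filter_imp. intros x Hx.
  apply (@is_pseries_scal R_AbsRing R_NormedModule); [apply Rmult_comm | exact Hx].
Qed.

Lemma is_expansion_mult f g x0 cf cg : is_expansion f x0 cf -> is_expansion g x0 cg ->
  is_expansion (fun x => f x * g x) x0 (PS_mult cf cg).
Proof.
  intros Hf Hg. split; [apply geom_bounded_mult; [apply Hf | apply Hg] |].
  generalize (filter_and _ _ (is_expansion_inside _ _ _ Hf) (is_expansion_inside _ _ _ Hg)).
  apply filter_imp. intros x [[Hrf Hvf] [Hrg Hvg]]. apply is_pseries_mult; assumption.
Qed.

Lemma is_expansion_inv f x0 c : a <= x0 <= b -> f x0 <> 0 -> is_expansion f x0 c ->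
  is_expansion (fun x => / f x) x0 (PS_inv c).
Proof.
  intros Hx0 Hfx0 Hf.
  assert (Hc0 : c O <> 0) by (rewrite (is_expansion_center _ _ _ Hx0 Hf); exact Hfx0).
  assert (Hq : geom_bounded (PS_inv c)) by (apply geom_bounded_PS_inv; [apply Hf | exact Hc0]).
  split; [exact Hq |].
  generalize (filter_and _ _ (is_expansion_inside _ _ _ Hf)
                (filter_le_within _ _ (geom_bounded_inside _ x0 Hq))).
  apply filter_imp. intros x [[Hrc Hfx] Hrq].
  assert (Hqx := PSeries_correct _ _ (CV_radius_inside _ _ Hrq)).
  assert (H1 : f x * PSeries (PS_inv c) (x - x0) = 1).
  { rewrite <- (is_pseries_unique _ _ _ (is_pseries_mult _ _ _ _ _ Hfx Hqx Hrc Hrq)).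
    rewrite (PSeries_ext _ _ _ (PS_mult_inv c Hc0)). apply is_pseries_unique, is_pseries_const. }
  assert (Hfx0' : f x <> 0) by (intro E; rewrite E, Rmult_0_l in H1; lra).
  replace (/ f x) with (PSeries (PS_inv c) (x - x0)); [exact Hqx |].
  rewrite <- (Rmult_1_l (/ f x)), <- H1. field. exact Hfx0'.
Qed.

Lemma near_derive_0_const (phi : R -> R) x0 : a <= x0 <= b ->
  near x0 (fun x => is_derive phi x 0) -> near x0 (fun x => phi x = phi x0).
Proof.
  intros Hx0 [eps H]. exists eps. intros x Hx Hab.
  change (Rabs (x - x0) < eps) in Hx.
  apply is_derive_0_eq. intros z Hz. apply H.
  - change (Rabs (z - x0) < eps). apply Rle_lt_trans with (Rabs (x - x0)); [| exact Hx].
    unfold Rmin, Rmax, Rabs in *. repeat destruct Rle_dec; repeat destruct Rcase_abs; lra.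
  - unfold Rmin, Rmax in Hz. destruct Rle_dec; lra.
Qed.

Lemma PS_derive_primitive F0 c n : PS_derive (PS_plus (PS_const F0) (PS_Int c)) n = c n.
Proof.
  unfold PS_derive, PS_plus, PS_const, PS_Int.
  change (INR (S n) * (0 + c n / INR (S n)) = c n). field. apply not_0_INR. lia.
Qed.

Lemma is_expansion_primitive f F x0 c : a <= x0 <= b -> is_expansion f x0 c ->
  (forall x, a <= x <= b -> is_derive F x (f x)) ->
  is_expansion F x0 (PS_plus (PS_const (F x0)) (PS_Int c)).
Proof.
  intros Hx0 Hf HF. set (cF := PS_plus (PS_const (F x0)) (PS_Int c)).
  assert (HcF : geom_bounded cF)
    by (apply geom_bounded_plus; [apply geom_bounded_const | apply geom_bounded_Int, Hf]).
  assert (Hd : near x0 (fun x => is_derive (fun t => PSeries cF (t - x0) - F t) x 0)).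
  { generalize (filter_and _ _ (is_expansion_inside _ _ _ Hf)
                  (filter_le_within _ _ (geom_bounded_inside _ x0 HcF))).
    apply near_imp. intros x Hx [[_ Hfx] HrF].
    replace 0 with (PSeries (PS_derive cF) (x - x0) - f x).
    - apply (is_derive_minus (fun t => PSeries cF (t - x0)) F);
        [apply is_derive_PSeries_shift, HrF | apply HF, Hx].
    - rewrite (PSeries_ext (PS_derive cF) c _ (PS_derive_primitive _ _)).
      rewrite (is_pseries_unique _ _ _ Hfx). ring. }
  split; [exact HcF |].
  generalize (filter_and _ _ (near_derive_0_const _ _ Hx0 Hd)
                (filter_le_within _ _ (geom_bounded_inside _ x0 HcF))).
  apply filter_imp. intros x [Hx Hr].
  rewrite Rminus_eq_0, PSeries_0 in Hx. change (cF O) with (F x0 + 0) in Hx.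
  replace (F x) with (PSeries cF (x - x0)) by lra.
  apply PSeries_correct, CV_radius_inside, Hr.
Qed.

Lemma is_expansion_linear_ode g w x0 c : a <= x0 <= b -> is_expansion g x0 c ->
  (forall x, a <= x <= b -> is_derive w x (g x * w x)) ->
  (forall x, a <= x <= b -> w x <> 0) ->
  is_expansion w x0 (PS_linear_ode c (w x0)).
Proof.
  intros Hx0 Hg Hw Hw0. set (cw := PS_linear_ode c (w x0)).
  assert (Hcw : geom_bounded cw) by (apply geom_bounded_PS_linear_ode, Hg).
  set (u := fun t => PSeries cw (t - x0)).
  assert (Hd : near x0 (fun x => is_derive (fun t => u t / w t) x 0)).
  { generalize (filter_and _ _ (is_expansion_inside _ _ _ Hg)
                  (filter_le_within _ _ (geom_bounded_inside _ x0 Hcw))).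
    apply near_imp. intros x Hx [[Hrc Hgx] Hrw].
    assert (Hu : is_derive u x (g x * u x)).
    { unfold u. rewrite <- (is_pseries_unique _ _ _ Hgx), <- PSeries_mult by assumption.
      rewrite <- (PSeries_ext _ _ _ (PS_derive_linear_ode c (w x0))).
      apply is_derive_PSeries_shift, Hrw. }
    replace 0 with ((g x * u x * w x - u x * (g x * w x)) / w x ^ 2) by (field; apply Hw0, Hx).
    apply is_derive_div; [exact Hu | apply Hw, Hx | apply Hw0, Hx]. }
  assert (Hu0 : u x0 = w x0)
    by (unfold u; rewrite Rminus_eq_0, PSeries_0; apply PS_linear_ode_unfold).
  split; [exact Hcw |].
  generalize (filter_and _ _ (near_derive_0_const _ _ Hx0 Hd)
                (filter_le_within _ _ (geom_bounded_inside _ x0 Hcw))).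
  apply near_imp. intros x Hx [Hc Hr].
  replace (w x) with (u x).
  - apply PSeries_correct, CV_radius_inside, Hr.
  - rewrite Hu0 in Hc. pose proof (Hw0 x Hx). pose proof (Hw0 x0 Hx0).
    replace (u x) with (u x / w x * w x) by (field; assumption).
    rewrite Hc. field. assumption.
Qed.

Lemma is_expansion_continuous f x0 c : a <= x0 <= b -> is_expansion f x0 c ->
  filterlim f (near x0) (locally (f x0)).
Proof.
  intros Hx0 Hf.
  apply (filterlim_ext_loc (fun x => PSeries c (x - x0))).
  - generalize (is_expansion_inside _ _ _ Hf). apply filter_imp.
    intros x [_ Hx]. exact (is_pseries_unique _ _ _ Hx).
  - assert (Hr := near_center _ _ Hx0 (is_expansion_inside _ _ _ Hf)).
    replace (f x0) with (PSeries c (x0 - x0))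
      by (rewrite Rminus_eq_0, PSeries_0; apply is_expansion_center; assumption).
    eapply filterlim_filter_le_1; [apply filter_le_within |].
    apply (continuous_comp (fun x => x - x0) (PSeries c)).
    + apply (continuous_minus (fun x => x) (fun _ => x0));
        [apply continuous_id | apply continuous_const].
    + apply continuity_pt_filterlim, PSeries_continuity, Hr.
Qed.

Lemma analytic_on_of_expansions f :
  (forall x0, a <= x0 <= b -> exists c, is_expansion f x0 c) -> analytic_on a b f.
Proof.
  intros H x0 Hx0. destruct (H x0 Hx0) as (c & _ & [eps Hc]).
  exists eps. split; [apply cond_pos |]. exists c.
  intros x Hx Hr. apply is_pseries_R, Hc; assumption.
Qed.

Lemma expansions_of_analytic_on f : a < b -> analytic_on a b f ->
  forall x0, a <= x0 <= b -> exists c, is_expansion f x0 c.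
Proof.
  intros Hab Hf x0 Hx0. destruct (Hf x0 Hx0) as (r & Hr & c & Hc).
  set (d := Rmin r (b - a) / 2).
  assert (Hd : 0 < d < r /\ d <= (b - a) / 2).
  { unfold d. pose proof (Rmin_l r (b - a)). pose proof (Rmin_r r (b - a)).
    assert (0 < Rmin r (b - a)) by (apply Rmin_glb_lt; lra). lra. }
  assert (Hx1 : exists x1, a <= x1 <= b /\ Rabs (x1 - x0) = d).
  { destruct (Rle_dec (x0 + d) b).
    - exists (x0 + d). split; [lra |]. rewrite Rabs_pos_eq; lra.
    - exists (x0 - d). split; [lra |]. rewrite Rabs_left; lra. }
  destruct Hx1 as (x1 & Hx1 & Ed).
  destruct (is_lim_seq_abs_bounded _ _ (ex_series_lim_0 _ (ex_intro _ _ (Hc x1 Hx1 ltac:(lra)))))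
    as [M HM].
  exists c. split.
  - exists M, (/ d). repeat split.
    + eapply Rle_trans; [apply Rabs_pos | apply (HM O)].
    + apply Rinv_0_lt_compat. lra.
    + intro n. specialize (HM n). rewrite Rabs_mult, <- RPow_abs, Ed in HM.
      assert (0 < d ^ n) by (apply pow_lt; lra).
      rewrite pow_inv. apply (Rmult_le_reg_r (d ^ n)); [assumption |].
      rewrite Rmult_assoc, Rinv_l by lra. lra.
  - exists (mkposreal r Hr). intros x Hxr Hx. apply is_pseries_R, Hc; assumption.
Qed.

End Expansion.

(** * The boundary value problem *)

Lemma Psi_ge_1 beta h x : 0 <= beta -> 0 <= h x -> 1 <= Psi beta h x.
Proof. intros Hb Hh. unfold Psi. pose proof (Rmult_le_pos _ _ Hb Hh). lra. Qed.

Lemma RInt_kern_ext beta h1 h2 x : 0 <= x -> (forall y, 0 <= y <= x -> h1 y = h2 y) ->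
  RInt (kern beta h1) 0 x = RInt (kern beta h2) 0 x.
Proof.
  intros Hx H12. apply RInt_ext. rewrite Rmin_left, Rmax_right by lra. intros y Hy.
  unfold kern, Psi. rewrite H12 by lra. do 3 f_equal.
  apply RInt_ext. rewrite Rmin_left, Rmax_right by lra. intros z Hz.
  unfold Psi. rewrite H12 by lra. reflexivity.
Qed.

Lemma ysol_ext lam gam beta h1 h2 x : 0 <= x <= lam ->
  (forall y, 0 <= y <= lam -> h1 y = h2 y) -> ysol lam gam beta h1 x = ysol lam gam beta h2 x.
Proof.
  intros Hx H12. unfold ysol, Dh.
  rewrite (RInt_kern_ext _ h1 h2 lam), (RInt_kern_ext _ h1 h2 x); try lra;
    intros y Hy; apply H12; lra.
Qed.

Section Problem.

Variables (lam gam beta : R) (h : R -> R).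
Hypotheses (Hlam : 0 < lam) (Hgam : 0 < gam) (Hbeta : 0 <= beta) (Hh : inK lam h).

(* Extending h by constants outside [0, lam] makes every function of the problem
   continuous on R, so that derivatives at 0 and lam are two-sided. *)
Definition hext (x : R) : R := h (clamp 0 lam x).

Local Notation P := (Psi beta hext).
Local Notation I x := (RInt (fun xi => xi / Psi beta hext xi) 0 x).
Local Notation w x := (exp (-2 * I x)).
Local Notation k := (kern beta hext).
Local Notation F x := (RInt (kern beta hext) 0 x).
Local Notation D := (Dh lam gam beta hext).
Local Notation y := (ysol lam gam beta hext).

Lemma hext_eq x : 0 <= x <= lam -> hext x = h x.
Proof. intros Hx. unfold hext. rewrite clamp_id; trivial. Qed.

Lemma ysol_hext x : 0 <= x <= lam -> ysol lam gam beta h x = y x.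
Proof. intros Hx. apply ysol_ext; [exact Hx |]. intros z Hz. symmetry. apply hext_eq, Hz. Qed.

Lemma Psi_hext_eq x : 0 <= x <= lam -> Psi beta h x = P x.
Proof. intros Hx. unfold Psi. rewrite hext_eq; trivial. Qed.

Lemma Psi_hext_ge_1 x : 1 <= P x.
Proof. apply Psi_ge_1; [exact Hbeta |]. apply Hh, clamp_in. lra. Qed.

Lemma h_expansions x0 : 0 <= x0 <= lam -> exists c, is_expansion 0 lam h x0 c.
Proof. apply expansions_of_analytic_on; [exact Hlam | apply Hh]. Qed.

Lemma Psi_hext_continuous x : continuous P x.
Proof.
  apply (continuous_plus (fun _ => 1) (fun x => beta * hext x)); [apply continuous_const |].
  apply (continuous_scal_r beta hext). apply continuous_comp_clamp; [lra |].
  intros x0 Hx0. destruct (h_expansions x0 Hx0) as [c Hc].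
  exact (is_expansion_continuous _ _ _ _ _ Hx0 Hc).
Qed.

Lemma is_derive_I x : is_derive (fun t => I t) x (x / P x).
Proof.
  pose proof (Psi_hext_ge_1 x).
  assert (Hc : forall z, continuous (fun xi => xi / P xi) z).
  { intro z. pose proof (Psi_hext_ge_1 z).
    apply continuity_pt_filterlim, continuity_pt_div;
      [apply continuity_pt_id | apply continuity_pt_filterlim, Psi_hext_continuous | lra]. }
  apply (is_derive_RInt (fun xi => xi / P xi) (fun t => I t) 0); [| apply Hc].
  apply filter_forall. intro t. apply (@RInt_correct R_CompleteNormedModule).
  apply (@ex_RInt_continuous R_CompleteNormedModule). intros z _. apply Hc.
Qed.

Lemma is_derive_exp_I s x :
  is_derive (fun t => exp (s * I t)) x (s * (x / P x) * exp (s * I x)).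
Proof.
  apply (is_derive_comp exp (fun t => s * I t)); [apply is_derive_exp |].
  apply (is_derive_scal (fun t => I t)), is_derive_I.
Qed.

Lemma kern_hext_continuous x : continuous k x.
Proof.
  pose proof (Psi_hext_ge_1 x).
  apply continuity_pt_filterlim, (continuity_pt_div (fun t => w t) P); [| | lra].
  - apply continuity_pt_filterlim, (@ex_derive_continuous R_AbsRing R_NormedModule (fun t => w t)).
    eexists. apply is_derive_exp_I.
  - apply continuity_pt_filterlim, Psi_hext_continuous.
Qed.

Lemma kern_hext_pos x : 0 < k x.
Proof. apply Rdiv_lt_0_compat; [apply exp_pos | pose proof (Psi_hext_ge_1 x); lra]. Qed.

Lemma ex_RInt_kern_hext u v : ex_RInt k u v.
Proof.
  apply (@ex_RInt_continuous R_CompleteNormedModule). intros z _. apply kern_hext_continuous.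
Qed.

Lemma is_derive_F x : is_derive (fun t => F t) x (k x).
Proof.
  apply (is_derive_RInt k (fun t => F t) 0); [| apply kern_hext_continuous].
  apply filter_forall. intro t. apply (@RInt_correct R_CompleteNormedModule), ex_RInt_kern_hext.
Qed.

Lemma F_0 : F 0 = 0.
Proof. exact (RInt_point 0 k). Qed.

Lemma F_le u v : u <= v -> F u <= F v.
Proof.
  intros Huv. rewrite <- (RInt_Chasles k 0 u v) by apply ex_RInt_kern_hext.
  assert (0 <= RInt k u v); [| change (F u <= F u + RInt k u v); lra].
  apply RInt_ge_0; [exact Huv | apply ex_RInt_kern_hext |].
  intros z _. left. apply kern_hext_pos.
Qed.

Lemma F_lam_nonneg : 0 <= F lam.
Proof. rewrite <- F_0 at 1. apply F_le. lra. Qed.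

Lemma ysol_hext_formula x : y x = (1 + gam * F x) / (1 + gam * F lam).
Proof.
  pose proof F_lam_nonneg. unfold ysol, Dh. field.
  split; [| lra]. pose proof (Rmult_le_pos _ _ (Rlt_le _ _ Hgam) F_lam_nonneg). lra.
Qed.

Lemma is_derive_ysol_hext x : is_derive (fun t => y t) x (D * k x).
Proof.
  apply (is_derive_scal (fun t => 1 / gam + F t)).
  rewrite <- (Rplus_0_l (k x)).
  apply (is_derive_plus (fun _ => 1 / gam) (fun t => F t));
    [apply (@is_derive_const R_AbsRing R_NormedModule) | apply is_derive_F].
Qed.


Lemma Psi_kern_hext t : P t * k t = w t.
Proof. unfold kern. field. pose proof (Psi_hext_ge_1 t). lra. Qed.

Lemma Psi_kern_hext_0 : P 0 * k 0 = 1.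
Proof.
  rewrite Psi_kern_hext, (RInt_point 0 (fun xi => xi / P xi)).
  change zero with 0. rewrite Rmult_0_r. apply exp_0.
Qed.

Lemma ysol_is_solution : is_solution lam gam beta h (ysol lam gam beta h).
Proof.
  assert (Hy : forall t, 0 < t < lam -> y t = ysol lam gam beta h t)
    by (intros t Ht; symmetry; apply ysol_hext; lra).
  assert (Hy0 : ysol lam gam beta h 0 = y 0) by (apply ysol_hext; lra).
  assert (Hylam : ysol lam gam beta h lam = y lam) by (apply ysol_hext; lra).
  exists (fun t => D * k t). split; [| split; [| split; [| split; [| split]]]].
  - intros x Hx. apply (is_derive_ext_loc (fun t => y t)); [| apply is_derive_ysol_hext].
    apply (filter_imp _ _ Hy), locally_open_interval, Hx.
  - apply (filterlim_ext_loc (fun t => (y t - y 0) / (t - 0))).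
    + apply (filter_imp (fun t => 0 < t < lam)); [| apply at_right_open_interval, Hlam].
      intros t Ht. rewrite Hy0, Hy by exact Ht. reflexivity.
    + apply is_derive_right_quotient, is_derive_ysol_hext.
  - rewrite Hylam. apply (filterlim_ext_loc (fun t => y t)).
    + apply (filter_imp _ _ Hy), at_left_open_interval, Hlam.
    + eapply filterlim_filter_le_1; [apply filter_le_within |].
      apply (@ex_derive_continuous R_AbsRing R_NormedModule (fun t => y t)).
      eexists. apply is_derive_ysol_hext.
  - intros x Hx.
    assert (HD : is_derive (fun t => Psi beta h t * (D * k t)) x (D * (-2 * (x / P x) * w x))).
    { apply (is_derive_ext_loc (fun t => D * w t));
        [| apply (is_derive_scal (fun t => w t)), is_derive_exp_I].
      apply (filter_imp (fun t => 0 < t < lam)); [| apply locally_open_interval, Hx].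
      intros t Ht. rewrite Psi_hext_eq by lra.
      assert (E : D * w t = P t * (D * k t)) by (rewrite <- Psi_kern_hext; ring). exact E. }
    split; [eexists; exact HD |].
    replace (Derive _ x) with (D * (-2 * (x / P x) * w x))
      by (symmetry; apply is_derive_unique, HD).
    rewrite <- (Psi_kern_hext x). field.
    pose proof (Psi_hext_ge_1 x). lra.
  - rewrite Psi_hext_eq, Hy0 by lra.
    replace (P 0 * (D * k 0)) with (D * (P 0 * k 0)) by ring.
    rewrite Psi_kern_hext_0. unfold ysol. rewrite F_0. field. lra.
  - rewrite Hylam, ysol_hext_formula. field.
    pose proof (Rmult_le_pos _ _ (Rlt_le _ _ Hgam) F_lam_nonneg). lra.
Qed.


Lemma flux_derivative_form dy :
  (forall x, 0 < x < lam ->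
     ex_derive (fun t => Psi beta h t * dy t) x /\
     Derive (fun t => Psi beta h t * dy t) x + 2 * x * dy x = 0) ->
  exists C, forall x, 0 < x < lam -> dy x = C * k x.
Proof.
  intros Hode. set (phi := fun t => Psi beta h t * dy t * exp (2 * I t)).
  assert (Hphi : forall x, 0 < x < lam -> is_derive phi x 0).
  { intros x Hx. destruct (Hode x Hx) as [Hex HD].
    replace 0 with (Derive (fun t => Psi beta h t * dy t) x * exp (2 * I x)
                    + Psi beta h x * dy x * (2 * (x / P x) * exp (2 * I x))).
    - apply (is_derive_mult (fun t => Psi beta h t * dy t) (fun t => exp (2 * I t)));
        [apply Derive_correct, Hex | apply is_derive_exp_I | intros; apply Rmult_comm].
    - rewrite Psi_hext_eq by lra.
      replace (Derive _ x) with (-2 * x * dy x) by lra.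
      field. pose proof (Psi_hext_ge_1 x). lra. }
  exists (phi (lam / 2)). intros x Hx.
  rewrite <- (is_derive_0_eq phi x (lam / 2)).
  - unfold phi, kern. rewrite Psi_hext_eq by lra.
    replace (exp (-2 * I x)) with (/ exp (2 * I x)) by (rewrite <- exp_Ropp; f_equal; ring).
    field. split; [apply Rgt_not_eq, exp_pos | pose proof (Psi_hext_ge_1 x); lra].
  - intros z Hz. apply Hphi, (segment_in_open_interval 0 lam x (lam / 2));
      [exact Hx | lra | exact Hz].
Qed.

Lemma solution_interior_form (u du : R -> R) C :
  (forall x, 0 < x < lam -> is_derive u x (du x)) ->
  (forall x, 0 < x < lam -> du x = C * k x) ->
  exists c0, forall x, 0 < x < lam -> u x = c0 + C * F x.
Proof.
  intros Hu HC. set (psi := fun t => u t - C * F t).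
  exists (psi (lam / 2)). intros x Hx.
  rewrite <- (is_derive_0_eq psi x (lam / 2)); [unfold psi; ring |].
  intros z Hz. assert (Hz' : 0 < z < lam)
    by (apply (segment_in_open_interval 0 lam x (lam / 2)); [exact Hx | lra | exact Hz]).
  replace 0 with (du z - C * k z) by (rewrite HC by exact Hz'; ring).
  apply (is_derive_minus u (fun t => C * F t)); [apply Hu, Hz' |].
  apply (is_derive_scal (fun t => F t)), is_derive_F.
Qed.

Lemma solution_unique u : is_solution lam gam beta h u ->
  forall eta, 0 < eta < lam -> u eta = ysol lam gam beta h eta.
Proof.
  intros (du & Hd & Hq & Hl & Hode & Hbc & Hend).
  destruct (flux_derivative_form du Hode) as [C HC].
  destruct (solution_interior_form u du C Hd HC) as [c0 Hc0].
  set (z := fun t => c0 + C * F t).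
  assert (Hz : forall x, is_derive z x (C * k x)).
  { intro x. rewrite <- (Rplus_0_l (C * k x)).
    apply (is_derive_plus (fun _ => c0) (fun t => C * F t));
      [apply (@is_derive_const R_AbsRing R_NormedModule) |
       apply (is_derive_scal (fun t => F t)), is_derive_F]. }
  assert (Hzc : forall x, continuous z x)
    by (intro x; apply (@ex_derive_continuous R_AbsRing R_NormedModule); eexists; apply Hz).
  assert (Hz0 : z 0 = c0) by (unfold z; rewrite F_0; ring).
  assert (Hu0 : u 0 = c0).
  { apply (filterlim_locally_unique (F := at_right 0) u).
    - exact (right_continuous_of_quotient _ _ _ Hq).
    - apply (filterlim_ext_loc z).
      + apply (filter_imp (fun t => 0 < t < lam)); [| apply at_right_open_interval, Hlam].
        intros t Ht. symmetry. apply Hc0, Ht.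
      + rewrite <- Hz0. eapply filterlim_filter_le_1; [apply filter_le_within | apply Hzc]. }
  assert (Hdu0 : du 0 = C * k 0).
  { apply (filterlim_locally_unique (F := at_right 0) (fun t => (u t - u 0) / (t - 0)));
      [exact Hq |].
    apply (filterlim_ext_loc (fun t => (z t - z 0) / (t - 0))).
    + apply (filter_imp (fun t => 0 < t < lam)); [| apply at_right_open_interval, Hlam].
      intros t Ht. rewrite Hu0, Hc0 by exact Ht. unfold z. rewrite F_0, Rmult_0_r, Rplus_0_r.
      reflexivity.
    + apply is_derive_right_quotient, Hz. }
  assert (Hulam : u lam = z lam).
  { apply (filterlim_locally_unique (F := at_left lam) u); [exact Hl |].
    apply (filterlim_ext_loc z).
    + apply (filter_imp (fun t => 0 < t < lam)); [| apply at_left_open_interval, Hlam].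
      intros t Ht. symmetry. apply Hc0, Ht.
    + eapply filterlim_filter_le_1; [apply filter_le_within | apply Hzc]. }
  assert (HCc0 : C = gam * c0).
  { rewrite Psi_hext_eq, Hdu0, Hu0 in Hbc by lra.
    assert (E : P 0 * (C * k 0) = C)
      by (rewrite <- (Rmult_1_r C) at 2; rewrite <- Psi_kern_hext_0; ring).
    lra. }
  intros eta Heta.
  rewrite Hc0, ysol_hext, ysol_hext_formula by lra.
  rewrite Hulam in Hend. unfold z in Hend. rewrite HCc0 in Hend |- *.
  pose proof (Rmult_le_pos _ _ (Rlt_le _ _ Hgam) F_lam_nonneg).
  replace c0 with (/ (1 + gam * F lam)).
  - field. lra.
  - apply (Rmult_eq_reg_r (1 + gam * F lam)); [| lra].
    rewrite Rinv_l by lra. rewrite <- Hend at 1. ring.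
Qed.


Lemma ysol_hext_expansion x0 : 0 <= x0 <= lam -> exists c, is_expansion 0 lam y x0 c.
Proof.
  intros Hx0. destruct (h_expansions x0 Hx0) as [ch Hch].
  assert (Hhext : is_expansion 0 lam hext x0 ch)
    by (apply (is_expansion_ext _ _ h); [intros x Hx; symmetry; apply hext_eq, Hx | exact Hch]).
  assert (HP := is_expansion_plus _ _ _ _ _ _ _ (is_expansion_const 0 lam 1 x0)
                  (is_expansion_scal _ _ beta _ _ _ Hhext)).
  assert (HP0 : P x0 <> 0) by (pose proof (Psi_hext_ge_1 x0); lra).
  assert (HinvP := is_expansion_inv _ _ _ _ _ Hx0 HP0 HP).
  assert (Hid := is_expansion_primitive _ _ _ (fun x => x) _ _ Hx0 (is_expansion_const 0 lam 1 x0)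
                   (fun x _ => @is_derive_id R_AbsRing x)).
  assert (Hg := is_expansion_scal _ _ (-2) _ _ _ (is_expansion_mult _ _ _ _ _ _ _ Hid HinvP)).
  (* exp (-2 I) is expanded as the solution of w' = -2 (x / P) w, which avoids composing
     power series with exp. *)
  assert (Hw := is_expansion_linear_ode _ _ _ (fun t => w t) _ _ Hx0 Hg
                  (fun x _ => is_derive_exp_I (-2) x) (fun x _ => Rgt_not_eq _ _ (exp_pos _))).
  assert (HF := is_expansion_primitive _ _ _ (fun t => F t) _ _ Hx0
                  (is_expansion_mult _ _ _ _ _ _ _ Hw HinvP) (fun x _ => is_derive_F x)).
  eexists. exact (is_expansion_scal _ _ D _ _ _
                    (is_expansion_plus _ _ _ _ _ _ _ (is_expansion_const 0 lam (1 / gam) x0) HF)).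
Qed.

Lemma ysol_analytic : analytic_on 0 lam (ysol lam gam beta h).
Proof.
  apply analytic_on_of_expansions. intros x0 Hx0.
  destruct (ysol_hext_expansion x0 Hx0) as [c Hc]. exists c.
  apply (is_expansion_ext _ _ y); [| exact Hc]. intros x Hx. symmetry. apply ysol_hext, Hx.
Qed.

Lemma ysol_bounds x : 0 <= x <= lam -> 0 <= ysol lam gam beta h x <= 1.
Proof.
  intros Hx. rewrite ysol_hext, ysol_hext_formula by exact Hx.
  assert (H0 : 0 <= F x) by (rewrite <- F_0 at 1; apply F_le; lra).
  assert (H1 : F x <= F lam) by (apply F_le; lra).
  assert (gam * F x <= gam * F lam) by (apply Rmult_le_compat_l; lra).
  assert (0 <= gam * F x) by (apply Rmult_le_pos; lra).
  split.
  - apply Rdiv_le_0_compat; lra.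
  - apply (Rmult_le_reg_r (1 + gam * F lam)); [lra |].
    unfold Rdiv. rewrite Rmult_assoc, Rinv_l by lra. lra.
Qed.

Lemma ysol_inK : inK lam (ysol lam gam beta h).
Proof.
  split; [split |].
  - exact ysol_analytic.
  - exists 1. intros x Hx. rewrite Rabs_pos_eq; apply ysol_bounds, Hx.
  - split; intros x Hx; [| rewrite Rabs_pos_eq]; apply ysol_bounds, Hx.
Qed.

End Problem.

Theorem lemma3p1 (lam gam beta : R) (h : R -> R)
  (Hlam : 0 < lam) (Hgam : 0 < gam) (Hbeta : 0 <= beta) (Hh : inK lam h) :
  is_solution lam gam beta h (ysol lam gam beta h) /\
  (forall y, is_solution lam gam beta h y ->
     forall eta, 0 < eta < lam -> y eta = ysol lam gam beta h eta) /\
  inK lam (ysol lam gam beta h).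
Proof.
  split; [| split].
  - exact (ysol_is_solution lam gam beta h Hlam Hgam Hbeta Hh).
  - exact (solution_unique lam gam beta h Hlam Hgam Hbeta Hh).
  - exact (ysol_inK lam gam beta h Hlam Hgam Hbeta Hh).
Qed.
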